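(* (a) The functions $\mathcal{F}$ and $\mathcal{R}$ are Lipschitz continuous over $\Omega_\theta$. (b) Let $L_{\mathcal{F}}$ and $L_{\mathcal{R}}$ be Lipschitz constants of $\mathcal{F}$ and $\mathcal{R}$ over $\Omega_\theta$, and suppose $\beta>L_{\mathcal{F}}+L_{\mathcal{R}}$. If $\bar z\in\Omega_\theta$ is a global minimizer of problem (R), then $\bar z$ is also a global minimizer of problem (RP). (c) Let $\delta=3\theta+\frac{2N\theta^3}{\lambda_1^2\lambda_2}$ and $\Omega_\delta=\{z\in\Omega_2:\mathcal{O}(z)\le\delta\}$. Let $L_{\mathcal{F}}$ and $L_{\mathcal{R}}$ be Lipschitz constants of $\mathcal{F}$ and $\mathcal{R}$ over $\Omega_\delta$, and suppose $\beta>L_{\mathcal{F}}+L_{\mathcal{R}}$. If $\bar z\in\Omega_\theta$ is a global minimizer of problem (RP), then $\bar z$ is also a global minimizer of problem (R).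
   Context: Let $N,N_0,N_1$ be positive integers, $X=(x_1,\ldots,x_N)\in\mathbb{R}^{N_0\times N}$ a given data matrix, and $\lambda_1,\lambda_2,\beta>0$ given parameters. For a real vector $y$, $(y)_+=\max\{y,0\}$ componentwise; $e$ denotes the all-ones vector of $\mathbb{R}^{N_1}$. For a matrix $Y$, $\|Y\|_F$ is the Frobenius norm. The variable is $z=(\mathrm{vec}(W)^\top,b^\top,\mathrm{vec}(V)^\top)^\top\in\mathbb{R}^{N_2}$, $N_2=N_0N_1+N_1+N_0+N_1N$, where $W\in\mathbb{R}^{N_1\times N_0}$, $b=(b_1^\top,b_2^\top)^\top$ with $b_1\in\mathbb{R}^{N_1}$, $b_2\in\mathbb{R}^{N_0}$, $V=(v_1,\ldots,v_N)\in\mathbb{R}^{N_1\times N}$, and vec is columnwise vectorization. Define $\mathcal{F}(z)=\frac1N\sum_{n=1}^N\|(W^\top v_n+b_2)_+-x_n\|_2^2$, $\mathcal{R}(z)=\lambda_1\sum_{n=1}^N e^\top v_n+\lambda_2\|W\|_F^2$, $\mathcal{P}(z)=\beta\sum_{n=1}^N e^\top(v_n-(Wx_n+b_1)_+)$, and $\mathcal{O}=\mathcal{F}+\mathcal{R}+\mathcal{P}$. Let $\Omega_1=\{z: v_n=(Wx_n+b_1)_+,\ n=1,\ldots,N\}$ and $\Omega_2=\{z: v_n\ge (Wx_n+b_1)_+,\ n=1,\ldots,N\}$. Fix $\theta>\frac1N\|X\|_F^2$ and let $\Omega_\theta=\{z\in\Omega_2:\mathcal{O}(z)\le\theta\}$.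 Problem (R) is: minimize $\mathcal{F}(z)+\mathcal{R}(z)$ subject to $z\in\Omega_1$. Problem (RP) is: minimize $\mathcal{O}(z)$ subject to $z\in\Omega_2$. *)

From HB Require Import structures.
From mathcomp Require Import all_boot all_order all_algebra.
From mathcomp Require Import reals.
Set Implicit Arguments. Unset Strict Implicit. Unset Printing Implicit Defensive.
Import Order.TTheory GRing.Theory Num.Theory.
Local Open Scope ring_scope.

Section Defs.
Variable R : realType.

(* The variable z = (vec W, b1, b2, vec V) stored componentwise. *)
Record param (N0 N1 N : nat) := Param {
  pW  : 'M[R]_(N1, N0);
  pb1 : 'cV[R]_N1;
  pb2 : 'cV[R]_N0;
  pV  : 'M[R]_(N1, N) }.

Definition frob2 (m n : nat) (A : 'M[R]_(m, n)) : R :=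
  \sum_(i < m) \sum_(j < n) A i j ^+ 2.

Definition relu (m n : nat) (A : 'M[R]_(m, n)) : 'M[R]_(m, n) :=
  map_mx (fun x => Num.max x 0) A.

Variables (N0 N1 N : nat).

Definition pdist (z1 z2 : param N0 N1 N) : R :=
  Num.sqrt (frob2 (pW z1 - pW z2) + frob2 (pb1 z1 - pb1 z2)
          + frob2 (pb2 z1 - pb2 z2) + frob2 (pV z1 - pV z2)).

Variables (X : 'M[R]_(N0, N)) (lam1 lam2 beta : R).

Definition Ffun (z : param N0 N1 N) : R :=
  N%:R^-1 * \sum_(n < N)
    frob2 (relu ((pW z)^T *m col n (pV z) + pb2 z) - col n X).

Definition Rfun (z : param N0 N1 N) : R :=
  lam1 * (\sum_(n < N) \sum_(k < N1) pV z k n) + lam2 * frob2 (pW z).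

Definition Pfun (z : param N0 N1 N) : R :=
  beta * \sum_(n < N) \sum_(k < N1)
    (col n (pV z) - relu (pW z *m col n X + pb1 z)) k 0.

Definition Ofun (z : param N0 N1 N) : R := Ffun z + Rfun z + Pfun z.

Definition Omega1 (z : param N0 N1 N) : Prop :=
  forall n : 'I_N, col n (pV z) = relu (pW z *m col n X + pb1 z).

Definition Omega2 (z : param N0 N1 N) : Prop :=
  forall (n : 'I_N) (k : 'I_N1),
    relu (pW z *m col n X + pb1 z) k 0 <= pV z k n.

Definition OmegaLvl (t : R) (z : param N0 N1 N) : Prop :=
  Omega2 z /\ Ofun z <= t.

Definition globmin_R (zb : param N0 N1 N) : Prop :=
  Omega1 zb /\ forall z, Omega1 z -> Ffun zb + Rfun zb <= Ffun z + Rfun z.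

Definition globmin_RP (zb : param N0 N1 N) : Prop :=
  Omega2 zb /\ forall z, Omega2 z -> Ofun zb <= Ofun z.

Definition lipconst (f : param N0 N1 N -> R) (S : param N0 N1 N -> Prop) (L : R)
  : Prop :=
  0 <= L /\ forall z1 z2, S z1 -> S z2 -> `|f z1 - f z2| <= L * pdist z1 z2.

Definition lipschitz_on (f : param N0 N1 N -> R) (S : param N0 N1 N -> Prop)
  : Prop := exists L, lipconst f S L.

End Defs.

From HB Require Import structures.
From mathcomp Require Import all_boot all_order all_algebra.
From mathcomp Require Import reals.
From mathcomp Require Import ring lra.
Import Order.TTheory GRing.Theory Num.Theory.
Local Open Scope ring_scope.
Set Implicit Arguments. Unset Strict Implicit. Unset Printing Implicit Defensive.

(* Let z lie in Omega_2 and let [slide z s] move its hidden variables V linearly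
   onto their feasible value (W x_n + b1)_+, reaching Omega_1 at s = 1.  Along
   this segment the penalty P drops by beta times the slack, while F + R grows
   by at most (L_F + L_R) times the distance travelled, itself at most the slack.
   So O does not increase as long as the segment stays in the sublevel set, and
   a discrete continuity argument shows that it never leaves it.  Comparing a
   minimizer with the endpoint in Omega_1 gives (b) and (c); for (c) any level
   delta > theta works.  For (a), all terms of O are nonnegative, so V, W and
   the residuals of F are bounded on a sublevel set. *)

Section RealInequalities.
Variable R : realFieldType.

Lemma max0_ge0 (x : R) : 0 <= Num.max x 0.
Proof. by rewrite le_max lexx orbT. Qed.

Lemma ler_max0B (x y : R) : `|Num.max x 0 - Num.max y 0| <= `|x - y|.
Proof.
have := ler_norm (x - y); have := ler_norm (y - x); rewrite distrC ler_norml => h1 h2.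
by apply/andP; split; case: (lerP x 0) => hx; case: (lerP y 0) => hy; lra.
Qed.

Lemma ler_sqrB (a b : R) : `|a ^+ 2 - b ^+ 2| <= `|a - b| * (`|a| + `|b|).
Proof.
have -> : a ^+ 2 - b ^+ 2 = (a - b) * (a + b) by ring.
by rewrite normrM ler_wpM2l // ler_normD.
Qed.

Lemma ler_term_sum (I : finType) (f : I -> R) i :
  (forall j, 0 <= f j) -> f i <= \sum_j f j.
Proof. by move=> f0; rewrite (bigD1 i) //= lerDl sumr_ge0. Qed.

Lemma ler_term_sum2 (I J : finType) (f : I -> J -> R) i j :
  (forall i j, 0 <= f i j) -> f i j <= \sum_i \sum_j f i j.
Proof.
move=> f0; apply: le_trans (ler_term_sum j (f0 i)) _.
by apply: (ler_term_sum (f := fun i => \sum_j f i j)) => k; rewrite sumr_ge0.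
Qed.

Lemma ler_norm_sumB n (f g : 'I_n -> R) c :
  (forall i, `|f i - g i| <= c) -> `|\sum_(i < n) f i - \sum_(i < n) g i| <= n%:R * c.
Proof.
move=> fg; rewrite -sumrB; apply: le_trans (ler_norm_sum _ _ _) _.
apply: le_trans (_ : \sum_(i < n) c <= _); first exact: ler_sum.
by rewrite sumr_const card_ord mulr_natl.
Qed.

Lemma sum_sqr_le_sqr_sum (I : finType) (f : I -> R) :
  (forall i, 0 <= f i) -> \sum_i f i ^+ 2 <= (\sum_i f i) ^+ 2.
Proof.
move=> f0; rewrite [leRHS]expr2 mulr_suml; apply: ler_sum => i _.
by rewrite expr2 ler_wpM2l // ler_term_sum.
Qed.

End RealInequalities.

Section LipschitzOnUnitInterval.
Variable R : realFieldType.
Implicit Types (K L a b c : R) (f g : R -> R).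

Definition lipschitz01 K f : Prop :=
  forall s t, 0 <= s <= 1 -> 0 <= t <= 1 -> `|f s - f t| <= K * `|s - t|.

Lemma lipschitz01_affine a b : lipschitz01 `|b| (fun s => a + s * b).
Proof.
move=> s t _ _; have -> : a + s * b - (a + t * b) = b * (s - t) by ring.
by rewrite normrM.
Qed.

Lemma lipschitz01D K L f g : lipschitz01 K f -> lipschitz01 L g ->
  lipschitz01 (K + L) (fun s => f s + g s).
Proof.
move=> lf lg s t s01 t01; rewrite mulrDl.
have -> : f s + g s - (f t + g t) = (f s - f t) + (g s - g t) by ring.
by apply: le_trans (ler_normD _ _) _; rewrite lerD ?lf ?lg.
Qed.

Lemma lipschitz01Z c K f : lipschitz01 K f ->
  lipschitz01 (`|c| * K) (fun s => c * f s).
Proof.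
move=> lf s t s01 t01; rewrite -mulrBr normrM -mulrA.
by rewrite ler_wpM2l ?lf.
Qed.

Lemma lipschitz01_sum (I : finType) (K : I -> R) (F : I -> R -> R) :
  (forall i, lipschitz01 (K i) (F i)) ->
  lipschitz01 (\sum_i K i) (fun s => \sum_i F i s).
Proof.
move=> lF s t s01 t01; rewrite -sumrB mulr_suml.
by apply: le_trans (ler_norm_sum _ _ _) _; apply: ler_sum => i _; apply: lF.
Qed.

Lemma lipschitz01_relu_sqr a b c :
  lipschitz01 (`|b| * (2 * (`|a| + `|b| + `|c|)))
    (fun s => (Num.max (a + s * b) 0 - c) ^+ 2).
Proof.
move=> s t s01 t01.
have bound u : 0 <= u <= 1 -> `|Num.max (a + u * b) 0 - c| <= `|a| + `|b| + `|c|.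
  case/andP=> u0 u1; apply: le_trans (ler_normB _ _) _; rewrite lerD2r.
  have := ler_max0B (a + u * b) 0; rewrite maxxx !subr0 => /le_trans -> //.
  apply: le_trans (ler_normD _ _) _; rewrite lerD2l normrM ger0_norm //.
  by rewrite ler_piMl.
apply: le_trans (ler_sqrB _ _) _.
rewrite mulrAC ler_pM ?addr_ge0 //.
- rewrite opprB addrA subrK.
  apply: le_trans (ler_max0B _ _) _.
  exact (lipschitz01_affine a b s01 t01).
- by rewrite mulr2n mulrDl mul1r lerD ?bound.
Qed.

End LipschitzOnUnitInterval.

Lemma lipschitz01_le_start (R : archiRealFieldType) (phi : R -> R) K c :
  lipschitz01 K phi -> phi 0 < c ->
  (forall s, 0 <= s <= 1 -> phi s <= c -> phi s <= phi 0) ->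
  forall s, 0 <= s <= 1 -> phi s <= phi 0.
Proof.
move=> lphi phi0c stay s /andP[s0 s1].
set eps := c - phi 0; have eps0 : 0 < eps by rewrite subr_gt0.
set m := (Num.bound (`|K| / eps)).+1.
have m0 : 0 < m%:R :> R by rewrite ltr0n.
have Km : `|K| / m%:R < eps.
  rewrite ltr_pdivrMr // mulrC -ltr_pdivrMr //.
  have := archi_boundP (divr_ge0 (normr_ge0 K) (ltW eps0)).
  by move/lt_le_trans; apply; rewrite ler_nat.
pose u k := s * (k%:R / m%:R).
have u01 k : (k <= m)%N -> 0 <= u k <= 1.
  move=> km; rewrite mulr_ge0 ?divr_ge0 //= -[1]mulr1 ler_pM ?divr_ge0 //.
  by rewrite ler_pdivrMr // mul1r ler_nat.
have phi_u k : (k <= m)%N -> phi (u k) <= phi 0.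
  elim: k => [|k IH] km; first by rewrite /u mul0r mulr0.
  have km' := ltnW km.
  apply: stay (u01 _ km) _.
  have step : `|u k.+1 - u k| = s / m%:R.
    have -> : u k.+1 - u k = s / m%:R by rewrite /u -natr1; ring.
    by rewrite ger0_norm ?divr_ge0.
  have := lphi _ _ (u01 _ km) (u01 _ km'); rewrite step => /ler_normlW.
  have : K * (s / m%:R) <= `|K| / m%:R.
    apply: le_trans (ler_wpM2r _ (ler_norm K)) _; first by rewrite divr_ge0.
    by rewrite ler_wpM2l // ler_piMl // invr_ge0 ltW.
  (* a step moves phi by less than eps, too little to jump from phi 0 over c *)
  have := IH km'; rewrite /eps in Km; lra.
by have := phi_u m (leqnn m); rewrite /u divff ?mulr1 // gt_eqF.
Qed.

Section Frobenius.
Variable R : realType.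

Lemma frob2_ge0 m n (A : 'M[R]_(m, n)) : 0 <= frob2 A.
Proof. by rewrite sumr_ge0 // => i _; rewrite sumr_ge0 // => j _; apply: sqr_ge0. Qed.

Lemma frob2Z m n a (A : 'M[R]_(m, n)) : frob2 (a *: A) = a ^+ 2 * frob2 A.
Proof.
rewrite /frob2 mulr_sumr; apply: eq_bigr => i _; rewrite mulr_sumr.
by apply: eq_bigr => j _; rewrite mxE exprMn.
Qed.

Lemma sqr_entry_le_frob2 m n (A : 'M[R]_(m, n)) i j : A i j ^+ 2 <= frob2 A.
Proof.
by apply: (ler_term_sum2 (f := fun k l => A k l ^+ 2)) => k l; apply: sqr_ge0.
Qed.

Lemma normr_le_sqrt (a b : R) : a ^+ 2 <= b -> `|a| <= Num.sqrt b.
Proof.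
by move=> ab; rewrite -sqrtr_sqr ler_sqrt // (le_trans (sqr_ge0 a)).
Qed.

Lemma sqrt_frob2_le_sum m n (A : 'M[R]_(m, n)) :
  (forall i j, 0 <= A i j) -> Num.sqrt (frob2 A) <= \sum_i \sum_j A i j.
Proof.
move=> A0; have rowA0 i : 0 <= \sum_j A i j by rewrite sumr_ge0.
rewrite -[leRHS]ger0_norm ?sumr_ge0 // -sqrtr_sqr ler_sqrt ?sqr_ge0 //.
apply: le_trans (sum_sqr_le_sqr_sum rowA0).
by apply: ler_sum => i _; apply: sum_sqr_le_sqr_sum.
Qed.

Lemma normr_entryB_le_pdist N0 N1 N (z1 z2 : param R N0 N1 N) :
  [/\ forall i j, `|pW z1 i j - pW z2 i j| <= pdist z1 z2,
      forall i j, `|pb2 z1 i j - pb2 z2 i j| <= pdist z1 z2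
    & forall k n, `|pV z1 k n - pV z2 k n| <= pdist z1 z2].
Proof.
have le_pdist m n (A : 'M[R]_(m, n)) i j :
    frob2 A <= frob2 (pW z1 - pW z2) + frob2 (pb1 z1 - pb1 z2)
               + frob2 (pb2 z1 - pb2 z2) + frob2 (pV z1 - pV z2) ->
    `|A i j| <= pdist z1 z2.
  by move=> hA; apply: normr_le_sqrt (le_trans (sqr_entry_le_frob2 A i j) hA).
have := frob2_ge0 (pW z1 - pW z2); have := frob2_ge0 (pb1 z1 - pb1 z2).
have := frob2_ge0 (pb2 z1 - pb2 z2); have := frob2_ge0 (pV z1 - pV z2).
by split=> i j; [move: (le_pdist _ _ (pW z1 - pW z2) i j)
  | move: (le_pdist _ _ (pb2 z1 - pb2 z2) i j)
  | move: (le_pdist _ _ (pV z1 - pV z2) i j)]; rewrite !mxE; apply; lra.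
Qed.

End Frobenius.

Section Slide.
Variables (R : realType) (N0 N1 N : nat) (X : 'M[R]_(N0, N)) (lam1 lam2 beta : R).
Implicit Types (z : param R N0 N1 N) (s : R).

Definition hidden z : 'M[R]_(N1, N) :=
  \matrix_(k, n) relu (pW z *m col n X + pb1 z) k 0.

Definition slack z : R := \sum_(n < N) \sum_(k < N1) (pV z k n - hidden z k n).

Definition slide z s : param R N0 N1 N :=
  Param (pW z) (pb1 z) (pb2 z) (pV z + s *: (hidden z - pV z)).

Lemma hidden_slide z s : hidden (slide z s) = hidden z.
Proof. by []. Qed.

Lemma Omega1P z : Omega1 X z <-> pV z = hidden z.
Proof.
split=> [z1 | Vh n]; last by apply/matrixP => k j; rewrite (ord1 j) Vh !mxE.
by apply/matrixP => k n; move/matrixP/(_ k 0): (z1 n); rewrite !mxE.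
Qed.

Lemma Omega2P z : Omega2 X z <-> forall k n, hidden z k n <= pV z k n.
Proof. by split=> z2 n k; [rewrite mxE; apply: z2 | have := z2 k n; rewrite mxE]. Qed.

Lemma Omega1_Omega2 z : Omega1 X z -> Omega2 X z.
Proof. by move/Omega1P => Vh; apply/Omega2P => k n; rewrite Vh. Qed.

Lemma PfunE z : Pfun X beta z = beta * slack z.
Proof.
by congr (_ * _); apply: eq_bigr => n _; apply: eq_bigr => k _; rewrite !mxE.
Qed.

Lemma slack_ge0 z : Omega2 X z -> 0 <= slack z.
Proof.
move/Omega2P => z2; rewrite sumr_ge0 // => n _.
by rewrite sumr_ge0 // => k _; rewrite subr_ge0.
Qed.

Lemma Omega1_slack0 z : Omega1 X z -> slack z = 0.
Proof.
move/Omega1P => Vh; rewrite /slack Vh big1 // => n _.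
by rewrite big1 // => k _; rewrite subrr.
Qed.

Lemma slack0_Omega1 z : Omega2 X z -> slack z = 0 -> Omega1 X z.
Proof.
move/Omega2P => z2 s0; apply/Omega1P/matrixP => k n; apply/eqP; rewrite -subr_eq0.
have gap0 n' k' : 0 <= pV z k' n' - hidden z k' n' by rewrite subr_ge0.
have row0 n' : 0 <= \sum_k' (pV z k' n' - hidden z k' n') by rewrite sumr_ge0.
have /psumr_eq0P/(_ n isT) := s0 => /(_ (fun n' _ => row0 n')).
by move/psumr_eq0P => /(_ (fun k' _ => gap0 n k')) /(_ k isT) ->.
Qed.

Lemma Ofun_Omega1 z : Omega1 X z ->
  Ofun X lam1 lam2 beta z = Ffun X z + Rfun lam1 lam2 z.
Proof. by move=> z1; rewrite /Ofun PfunE Omega1_slack0 // mulr0 addr0. Qed.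

Lemma slide0 z : slide z 0 = z.
Proof. by case: z => W b1 b2 V; rewrite /slide scale0r addr0. Qed.

Lemma slide1_Omega1 z : Omega1 X (slide z 1).
Proof. by apply/Omega1P; rewrite /= scale1r addrC subrK. Qed.

Lemma slide_Omega2 z s : Omega2 X z -> s <= 1 -> Omega2 X (slide z s).
Proof.
move/Omega2P => z2 s1; apply/Omega2P => k n; rewrite hidden_slide.
have -> : pV (slide z s) k n = pV z k n + s * (hidden z k n - pV z k n).
  by rewrite !mxE.
have : 0 <= (1 - s) * (pV z k n - hidden z k n).
  by rewrite mulr_ge0 // subr_ge0 // z2.
lra.
Qed.

Lemma slack_slide z s : slack (slide z s) = (1 - s) * slack z.
Proof.
rewrite /slack mulr_sumr; apply: eq_bigr => n _; rewrite mulr_sumr.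
by apply: eq_bigr => k _; rewrite /= !mxE; ring.
Qed.

Lemma Rfun_slide z s :
  Rfun lam1 lam2 (slide z s) = Rfun lam1 lam2 z - s * (lam1 * slack z).
Proof.
rewrite /Rfun; have -> : \sum_(n < N) \sum_(k < N1) pV (slide z s) k n
          = \sum_(n < N) \sum_(k < N1) pV z k n - s * slack z.
  rewrite /slack mulr_sumr -sumrB; apply: eq_bigr => n _.
  by rewrite mulr_sumr -sumrB; apply: eq_bigr => k _; rewrite !mxE; ring.
by rewrite /=; ring.
Qed.

Lemma pdist_slide z s : Omega2 X z -> 0 <= s -> pdist z (slide z s) <= s * slack z.
Proof.
move/Omega2P => z2 s0; rewrite /pdist /= !subrr.
have -> : pV z - (pV z + s *: (hidden z - pV z)) = s *: (pV z - hidden z).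
  by apply/matrixP => k n; rewrite !mxE; ring.
have frob2_0 m n : frob2 (0 : 'M[R]_(m, n)) = 0.
  by rewrite /frob2 big1 // => i _; rewrite big1 // => j _; rewrite mxE expr0n.
rewrite !frob2_0 !add0r frob2Z sqrtrM ?sqr_ge0 // sqrtr_sqr ger0_norm //.
rewrite ler_wpM2l // /slack exchange_big /=.
have -> : \sum_k \sum_n (pV z k n - hidden z k n) = \sum_k \sum_n (pV z - hidden z) k n.
  by apply: eq_bigr => k _; apply: eq_bigr => n _; rewrite !mxE.
by apply: sqrt_frob2_le_sum => k n; move: (z2 k n); rewrite -subr_ge0 !mxE.
Qed.

End Slide.

Section Descent.
Variables (R : realType) (N0 N1 N : nat) (X : 'M[R]_(N0, N)) (lam1 lam2 beta : R).
Implicit Types (z : param R N0 N1 N) (s t : R).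

Local Notation O := (@Ofun R N0 N1 N X lam1 lam2 beta).
Local Notation F := (Ffun (N1 := N1) X).
Local Notation Rg := (Rfun (N0 := N0) (N := N) lam1 lam2).
Local Notation Omega_ t := (@OmegaLvl R N0 N1 N X lam1 lam2 beta t).

Definition resid z n : 'cV[R]_N0 :=
  relu ((pW z)^T *m col n (pV z) + pb2 z) - col n X.

Lemma residE z n i j :
  resid z n i j = Num.max (\sum_k pW z k i * pV z k n + pb2 z i j) 0 - X i n.
Proof. by rewrite !mxE; under eq_bigr do rewrite !mxE. Qed.

Lemma Ffun_slide_lipschitz01 z : exists K, lipschitz01 K (fun s => F (slide X z s)).
Proof.
pose a n i (j : 'I_1) := \sum_k pW z k i * pV z k n + pb2 z i j.
pose b n i := \sum_k pW z k i * (hidden X z k n - pV z k n).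
have Fslide s : F (slide X z s) = N%:R^-1 * \sum_(n < N) \sum_(i < N0) \sum_(j < 1)
    (Num.max (a n i j + s * b n i) 0 - X i n) ^+ 2.
  congr (_ * _); apply: eq_bigr => n _; apply: eq_bigr => i _; apply: eq_bigr => j _.
  rewrite -/(resid _ n) residE /a /b mulr_sumr addrAC -big_split /=.
  by congr ((Num.max (_ + _) 0 - _) ^+ 2); apply: eq_bigr => k _; rewrite !mxE; ring.
pose K n i j := `|b n i| * (2 * (`|a n i j| + `|b n i| + `|X i n|)).
have lip : lipschitz01 (`|N%:R^-1| * \sum_n \sum_i \sum_j K n i j)
    (fun s => N%:R^-1 * \sum_(n < N) \sum_(i < N0) \sum_(j < 1)
       (Num.max (a n i j + s * b n i) 0 - X i n) ^+ 2).
  apply: lipschitz01Z; do 3!apply: lipschitz01_sum => ?.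
  exact: lipschitz01_relu_sqr.
by eexists => s t s01 t01; rewrite !Fslide; apply: lip.
Qed.

Lemma Ofun_slide z s : O (slide X z s) =
  F (slide X z s) + (Rg z + beta * slack X z + s * - ((lam1 + beta) * slack X z)).
Proof. by rewrite /Ofun Rfun_slide PfunE slack_slide; ring. Qed.

Lemma Ofun_slide_lipschitz01 z : exists K, lipschitz01 K (fun s => O (slide X z s)).
Proof.
have [K lipF] := Ffun_slide_lipschitz01 z.
have lipO := lipschitz01D lipF (lipschitz01_affine (Rg z + beta * slack X z)
  (- ((lam1 + beta) * slack X z))).
by eexists => s t s01 t01; rewrite !Ofun_slide; apply: lipO.
Qed.

Lemma slide_descent t LF LR z :
  lipconst F (Omega_ t) LF -> lipconst Rg (Omega_ t) LR -> LF + LR <= beta ->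
  Omega2 X z -> O z < t ->
  F (slide X z 1) + Rg (slide X z 1) + (beta - (LF + LR)) * slack X z <= O z.
Proof.
move=> [LF0 lipF] [LR0 lipR] LFRb z2 Ozt.
have zt : Omega_ t z by split=> //; apply: ltW.
have S0 := slack_ge0 z2.
have unit01 : 0 <= (1 : R) <= 1 by rewrite ler01 lexx.
have FR_slide s : 0 <= s <= 1 -> Omega_ t (slide X z s) ->
    F (slide X z s) + Rg (slide X z s) <= F z + Rg z + (LF + LR) * (s * slack X z).
  case/andP=> s0 s1 zst; have d := pdist_slide z2 s0.
  have := lipF _ _ zt zst; rewrite distrC => /ler_normlW.
  have := lipR _ _ zt zst; rewrite distrC => /ler_normlW.
  have := ler_wpM2l LF0 d; have := ler_wpM2l LR0 d; lra.
have O_slide s : 0 <= s <= 1 -> O (slide X z s) <= t -> O (slide X z s) <= O z.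
  move=> s01 Ozst; have /andP[s0 s1] := s01.
  have := FR_slide s s01 (conj (slide_Omega2 z2 s1) Ozst).
  have := ler_wpM2r (mulr_ge0 s0 S0) LFRb.
  by rewrite /Ofun !PfunE slack_slide; nra.
have [K lipO] := Ofun_slide_lipschitz01 z.
have O1 : O (slide X z 1) <= O z.
  have Ost : O (slide X z 0) < t by rewrite slide0.
  rewrite -{2}(slide0 X z); apply: (lipschitz01_le_start lipO Ost) => [s s01 Ozs|].
    by rewrite slide0; apply: O_slide.
  exact: unit01.
have := FR_slide 1 unit01
  (conj (slide_Omega2 z2 (lexx 1)) (le_trans O1 (ltW Ozt))).
by rewrite mul1r /Ofun PfunE; lra.
Qed.

Lemma globmin_R_RP t LF LR zb :
  lipconst F (Omega_ t) LF -> lipconst Rg (Omega_ t) LR -> LF + LR <= beta ->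
  Omega_ t zb -> globmin_R X lam1 lam2 zb -> globmin_RP X lam1 lam2 beta zb.
Proof.
move=> lipF lipR LFRb [_ Ozbt] [zb1 zbmin]; split=> [|z z2]; first exact: Omega1_Omega2.
rewrite Ofun_Omega1 // in Ozbt *.
have [tOz | Ozt] := lerP t (O z); first exact: le_trans tOz.
have := slide_descent lipF lipR LFRb z2 Ozt.
have := zbmin _ (slide1_Omega1 X z).
have : 0 <= (beta - (LF + LR)) * slack X z by rewrite mulr_ge0 ?subr_ge0 ?slack_ge0.
lra.
Qed.

Lemma globmin_RP_R t LF LR zb :
  lipconst F (Omega_ t) LF -> lipconst Rg (Omega_ t) LR -> LF + LR < beta ->
  O zb < t -> globmin_RP X lam1 lam2 beta zb -> globmin_R X lam1 lam2 zb.
Proof.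
move=> lipF lipR LFRb Ozbt [zb2 zbmin].
have zb1 : Omega1 X zb.
  apply: (slack0_Omega1 zb2); apply/eqP; rewrite eq_le (slack_ge0 zb2) andbT leNgt.
  apply/negP => S0; have := slide_descent lipF lipR (ltW LFRb) zb2 Ozbt.
  have := zbmin _ (Omega1_Omega2 (slide1_Omega1 X zb)).
  rewrite (Ofun_Omega1 _ _ _ (slide1_Omega1 X zb)).
  have : 0 < (beta - (LF + LR)) * slack X zb by rewrite mulr_gt0 ?subr_gt0.
  lra.
split=> // z z1; have := zbmin _ (Omega1_Omega2 z1).
by rewrite !Ofun_Omega1.
Qed.

End Descent.

Section Sublevel.
Variables (R : realType) (N0 N1 N : nat) (X : 'M[R]_(N0, N)) (lam1 lam2 beta : R).
Implicit Types (z : param R N0 N1 N) (t : R).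

Local Notation F := (Ffun (N1 := N1) X).
Local Notation Rg := (Rfun (N0 := N0) (N := N) lam1 lam2).
Local Notation Omega_ t := (@OmegaLvl R N0 N1 N X lam1 lam2 beta t).

Hypotheses (N_gt0 : (0 < N)%N) (lam1_gt0 : 0 < lam1) (lam2_gt0 : 0 < lam2)
  (beta_gt0 : 0 < beta).

Lemma normr_residB z1 z2 CW CV n i j :
  (forall k i, `|pW z2 k i| <= CW) -> (forall k n, `|pV z1 k n| <= CV) ->
  `|resid X z1 n i j - resid X z2 n i j| <= (N1%:R * (CV + CW) + 1) * pdist z1 z2.
Proof.
move=> W2CW V1CV; have [dW db dV] := normr_entryB_le_pdist z1 z2.
rewrite !residE opprB addrA subrK; apply: le_trans (ler_max0B _ _) _.
rewrite opprD addrACA mulrDl mul1r -mulrA.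
apply: le_trans (ler_normD _ _) (lerD _ (db i j)).
apply: ler_norm_sumB => k.
have -> : pW z1 k i * pV z1 k n - pW z2 k i * pV z2 k n
  = (pW z1 k i - pW z2 k i) * pV z1 k n + pW z2 k i * (pV z1 k n - pV z2 k n) by ring.
apply: le_trans (ler_normD _ _) _; rewrite !normrM mulrDl [CV * _]mulrC.
by apply: lerD; apply: ler_pM.
Qed.

Lemma Ffun_lipschitz_bound z1 z2 CW CV C :
  (forall k i, `|pW z2 k i| <= CW) -> (forall k n, `|pV z1 k n| <= CV) ->
  (forall n i j, `|resid X z1 n i j| <= C) ->
  (forall n i j, `|resid X z2 n i j| <= C) ->
  `|F z1 - F z2| <= N0%:R * (N1%:R * (CV + CW) + 1) * (C + C) * pdist z1 z2.
Proof.
move=> W2CW V1CV r1C r2C.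
set e := (N1%:R * (CV + CW) + 1) * pdist z1 z2 * (C + C).
have entry n i j : `|resid X z1 n i j ^+ 2 - resid X z2 n i j ^+ 2| <= e.
  apply: le_trans (ler_sqrB _ _) _.
  by apply: ler_pM; rewrite ?addr_ge0 ?lerD //; apply: normr_residB.
rewrite /Ffun -mulrBr normrM ger0_norm ?invr_ge0 ?ler0n //.
apply: le_trans (ler_wpM2l _ (ler_norm_sumB (c := N0%:R * e) _)) _ => [|n|].
- by rewrite invr_ge0 ler0n.
- rewrite /frob2 -[e]mul1r; do 2!apply: ler_norm_sumB => ?; exact: entry.
- rewrite mulrA mulVf ?mul1r; last by rewrite pnatr_eq0 -lt0n.
  by rewrite /e !mulrA mulrAC.
Qed.

Lemma Rfun_lipschitz_bound z1 z2 CW :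
  (forall k i, `|pW z1 k i| <= CW) -> (forall k i, `|pW z2 k i| <= CW) ->
  `|Rg z1 - Rg z2| <=
    (lam1 * (N%:R * N1%:R) + lam2 * (N1%:R * N0%:R * (CW + CW))) * pdist z1 z2.
Proof.
move=> W1CW W2CW; have [dW _ dV] := normr_entryB_le_pdist z1 z2.
have -> : Rg z1 - Rg z2 = lam1 * (\sum_n \sum_k pV z1 k n - \sum_n \sum_k pV z2 k n)
    + lam2 * (frob2 (pW z1) - frob2 (pW z2)) by rewrite /Rfun; ring.
rewrite mulrDl; apply: le_trans (ler_normD _ _) _.
rewrite !normrM (gtr0_norm lam1_gt0) (gtr0_norm lam2_gt0) -!mulrA.
apply: lerD; apply: ler_wpM2l; try exact: ltW.
  by do 2!apply: ler_norm_sumB => ?; apply: dV.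
rewrite /frob2; do 2!apply: ler_norm_sumB => ?.
apply: le_trans (ler_sqrB _ _) _; rewrite mulrC.
by apply: ler_pM; rewrite ?addr_ge0 ?lerD.
Qed.

(* The bias b2 is not bounded on a sublevel set, hence the residuals are. *)
Lemma OmegaLvl_bounds t z : Omega_ t z ->
  [/\ forall k n, `|pV z k n| <= t / lam1,
      forall k i, `|pW z k i| <= Num.sqrt (t / lam2)
    & forall n i j, `|resid X z n i j| <= Num.sqrt (N%:R * t)].
Proof.
case=> z2 Ozt.
have V0 k n : 0 <= pV z k n.
  by apply: le_trans (proj1 (Omega2P _ _) z2 k n); rewrite !mxE max0_ge0.
have F_sum : \sum_n frob2 (resid X z n) = N%:R * F z.
  by rewrite /Ffun mulrA mulfV ?mul1r // pnatr_eq0 -lt0n.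
have F0 : 0 <= F z.
  by rewrite /Ffun mulr_ge0 ?invr_ge0 ?sumr_ge0 // => n _; apply: frob2_ge0.
have V0sum : 0 <= lam1 * \sum_n \sum_k pV z k n.
  by rewrite mulr_ge0 ?(ltW lam1_gt0) // sumr_ge0 // => n _; rewrite sumr_ge0.
have W0 := mulr_ge0 (ltW lam2_gt0) (frob2_ge0 (pW z)).
have P0 := mulr_ge0 (ltW beta_gt0) (slack_ge0 z2).
move: Ozt; rewrite /Ofun /Rfun PfunE => Ozt.
split=> [k n | k i | n i j].
- rewrite ger0_norm // ler_pdivlMr // mulrC.
  have /= := ler_wpM2l (ltW lam1_gt0)
    (ler_term_sum2 (f := fun n k => pV z k n) n k (fun n k => V0 k n)).
  lra.
- apply: normr_le_sqrt; rewrite ler_pdivlMr // mulrC.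
  have := ler_wpM2l (ltW lam2_gt0) (sqr_entry_le_frob2 (pW z) k i).
  lra.
- apply: normr_le_sqrt; apply: le_trans (sqr_entry_le_frob2 _ i j) _.
  apply: le_trans (ler_term_sum n (fun n => frob2_ge0 (resid X z n))) _.
  rewrite F_sum ler_wpM2l //; lra.
Qed.

Lemma Ffun_lipschitz_on t : 0 <= t -> lipschitz_on F (Omega_ t).
Proof.
move=> t_ge0; have CV0 := divr_ge0 t_ge0 (ltW lam1_gt0).
exists (N0%:R * (N1%:R * (t / lam1 + Num.sqrt (t / lam2)) + 1)
        * (Num.sqrt (N%:R * t) + Num.sqrt (N%:R * t))).
split=> [|z1 z2 z1t z2t].
  apply: mulr_ge0; last by rewrite addr_ge0 ?sqrtr_ge0.
  by rewrite mulr_ge0 ?ler0n // addr_ge0 // mulr_ge0 ?ler0n // addr_ge0 ?sqrtr_ge0.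
have [V1 _ r1] := OmegaLvl_bounds z1t; have [_ W2 r2] := OmegaLvl_bounds z2t.
exact: Ffun_lipschitz_bound.
Qed.

Lemma Rfun_lipschitz_on t : lipschitz_on Rg (Omega_ t).
Proof.
exists (lam1 * (N%:R * N1%:R)
        + lam2 * (N1%:R * N0%:R * (Num.sqrt (t / lam2) + Num.sqrt (t / lam2)))).
split=> [|z1 z2 z1t z2t].
  by rewrite addr_ge0 ?mulr_ge0 ?addr_ge0 ?sqrtr_ge0 ?ler0n
    ?(ltW lam1_gt0) ?(ltW lam2_gt0).
have [_ W1 _] := OmegaLvl_bounds z1t; have [_ W2 _] := OmegaLvl_bounds z2t.
exact: Rfun_lipschitz_bound W1 W2.
Qed.

End Sublevel.

Theorem theorem2p2 (R : realType) (N0 N1 N : nat) (X : 'M[R]_(N0, N))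
    (lam1 lam2 beta theta : R) :
  (0 < N)%N -> (0 < N0)%N -> (0 < N1)%N ->
  0 < lam1 -> 0 < lam2 -> 0 < beta ->
  N%:R^-1 * frob2 X < theta ->
  let F := Ffun (N1 := N1) X in
  let Rg := Rfun (N0 := N0) (N := N) lam1 lam2 in
  let Om_theta := OmegaLvl X lam1 lam2 beta theta in
  let delta := 3 * theta + (2 * N%:R * theta ^+ 3) / (lam1 ^+ 2 * lam2) in
  let Om_delta := OmegaLvl X lam1 lam2 beta delta in
  (* (a) *)
  (lipschitz_on F Om_theta /\ lipschitz_on Rg Om_theta) /\
  (* (b) *)
  (forall (LF LR : R) (zb : param R N0 N1 N),
     lipconst F Om_theta LF -> lipconst Rg Om_theta LR -> LF + LR < beta ->
     Om_theta zb -> globmin_R X lam1 lam2 zb ->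
     globmin_RP X lam1 lam2 beta zb) /\
  (* (c) *)
  (forall (LF LR : R) (zb : param R N0 N1 N),
     lipconst F Om_delta LF -> lipconst Rg Om_delta LR -> LF + LR < beta ->
     Om_theta zb -> globmin_RP X lam1 lam2 beta zb ->
     globmin_R X lam1 lam2 zb).
Proof.
move=> N_gt0 _ _ lam1_gt0 lam2_gt0 beta_gt0 X_theta F Rg Om_theta delta Om_delta.
have theta_gt0 : 0 < theta.
  by apply: le_lt_trans X_theta; rewrite mulr_ge0 ?invr_ge0 ?ler0n ?frob2_ge0.
have theta_delta : theta < delta.
  have : 0 < (2 * N%:R * theta ^+ 3) / (lam1 ^+ 2 * lam2).
    by rewrite divr_gt0 ?mulr_gt0 ?exprn_gt0 ?ltr0n.
  rewrite /delta; lra.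
split; [split|split].
- exact: Ffun_lipschitz_on (ltW theta_gt0).
- exact: Rfun_lipschitz_on.
- by move=> LF LR zb lipF lipR /ltW; apply: globmin_R_RP lipF lipR.
- move=> LF LR zb lipF lipR LFRb [_ Ozb].
  exact: globmin_RP_R lipF lipR LFRb (le_lt_trans Ozb theta_delta).
Qed.
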